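(* Let $G,G'$ be finitely generated groups with neutral elements $o,o'$, equipped with word metrics $d,d'$ coming from Cayley graphs with respect to finite generating sets, let $0<c<\infty$, and equip $G'':=G\times G'$ with the metric $\rho_c((x,x'),(y,y')):=d(x,y)+d'(x',y')/c$ and origin $o'':=(o,o')$. Then the horocompactification of $(G'',\rho_c)$ is identified with $\overline G\times\overline{G'}$: precisely, the set of points of $\overline{G''}$ (viewed as functions on $G''$) is exactly the set of functions $d_{(u,u')}(y,y'):=d_u(y)+d_{u'}(y')/c$ with $u\in\overline G$ and $u'\in\overline{G'}$.
   Context: For a countable set $H$ with origin $o_H$ and a metric $\rho$ all of whose balls are finite: for $x\in H$ let $\rho_x(y):=\rho(x,y)-\rho(x,o_H)$. Identifying $x$ with $\rho_x$, the horocompactification $\overline H$ is the closure of $\{\rho_x: x\in H\}$ in the space of $1$-Lipschitz functions on $H$ vanishing at $o_H$, with pointwise convergence; $\partial H:=\overline H\setminus H$. Elements $u\in\overline G$ are regarded as functions $d_u$ on $G$ (with $d_u=d(u,\cdot)-d(u,o)$ when $u\in G$), and similarly for $G'$ with origin $o'$ and metric $d'$. *)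

From Stdlib Require Import Reals List.
Open Scope R_scope.

Record is_group (T : Type) (mul : T -> T -> T) (inv : T -> T) (one : T) : Prop := {
  grp_assoc : forall x y z, mul x (mul y z) = mul (mul x y) z;
  grp_mul1g : forall x, mul one x = x;
  grp_mulg1 : forall x, mul x one = x;
  grp_mulVg : forall x, mul (inv x) x = one;
  grp_mulgV : forall x, mul x (inv x) = one }.

(* d is the word metric of the Cayley graph of (T,mul,inv) w.r.t. the finite
   set S (a list): d x y is the least length of a word w = s_1 ... s_n with
   letters in S ∪ S^{-1} such that y = x s_1 ... s_n.  (Totality of d forces S
   to generate the group.) *)
Definition word_metric (T : Type) (mul : T -> T -> T) (inv : T -> T)
    (S : list T) (d : T -> T -> nat) : Prop :=
  forall (x y : T) (n : nat),
    (d x y <= n)%nat <->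
    exists w : list T,
      (length w <= n)%nat /\
      Forall (fun s => In s S \/ In (inv s) S) w /\
      y = fold_left mul w x.

(* Horocompactification of (H, rho) with origin o, as a set of functions
   H -> R: the closure, in the space of 1-Lipschitz functions vanishing at o
   with the topology of pointwise convergence, of { rho_x : x in H } where
   rho_x y = rho x y - rho x o.  Closure in the product topology is written
   out through basic neighbourhoods (finitely many coordinates, radius eps). *)
Definition horo (H : Type) (rho : H -> H -> R) (o : H) (f : H -> R) : Prop :=
  (forall y z, Rabs (f y - f z) <= rho y z) /\
  f o = 0 /\
  (forall (F : list H) (eps : R), 0 < eps ->
     exists x : H, forall y, In y F -> Rabs ((rho x y - rho x o) - f y) < eps).

Definition rho_prod (G G' : Type) (d : G -> G -> nat) (d' : G' -> G' -> nat)
    (c : R) (p q : G * G') : R :=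
  INR (d (fst p) (fst q)) + INR (d' (snd p) (snd q)) / c.

(* A horofunction of the l^1-type sum of two metrics splits additively:
   approximating f(y,y'), f(y,o') and f(o,y') by the same point x of the
   product, the distance terms cancel, so f(y,y') = f(y,o') + f(o,y').  The
   two slices are horofunctions of the factors, and conversely a sum of
   horofunctions of the factors is approximated by pairs of approximants.
   The weight 1/c of the second factor only rescales its horofunctions. *)
From Stdlib Require Import Reals List Lra Lia.
Open Scope R_scope.

Lemma word_metric_refl (T : Type) (mul : T -> T -> T) (inv : T -> T)
  (S : list T) (d : T -> T -> nat) :
  word_metric T mul inv S d -> forall x, d x x = 0%nat.
Proof.
  intros Hd x.
  assert (Hle : (d x x <= 0)%nat) by (apply Hd; exists nil; simpl; auto).
  lia.
Qed.

Lemma Req0_of_Rabs_lt_all (a : R) : (forall eps, 0 < eps -> Rabs a < eps) -> a = 0.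
Proof.
  intros Ha. destruct (Req_dec a 0) as [|Hnz]; auto.
  pose proof (Rabs_pos_lt a Hnz).
  specialize (Ha (Rabs a) ltac:(lra)). lra.
Qed.

Lemma horo_scale (H : Type) (r r2 : H -> H -> R) (o : H) (u v : H -> R) (k : R) :
  0 < k -> (forall x y, r2 x y = k * r x y) -> (forall y, v y = k * u y) ->
  horo H r o u -> horo H r2 o v.
Proof.
  intros Hk Hr Hv [Hlip [Ho Happ]]. split; [|split].
  - intros y z. rewrite Hr, !Hv, <- Rmult_minus_distr_l, Rabs_mult, Rabs_pos_eq by lra.
    apply Rmult_le_compat_l; [lra | apply Hlip].
  - rewrite Hv, Ho. ring.
  - intros F eps Heps.
    destruct (Happ F (eps / k) ltac:(apply Rdiv_lt_0_compat; lra)) as [x Hx].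
    exists x. intros y Hy. rewrite !Hr, Hv.
    replace (k * r x y - k * r x o - k * u y) with (k * (r x y - r x o - u y)) by ring.
    rewrite Rabs_mult, Rabs_pos_eq by lra.
    replace eps with (k * (eps / k)) by (field; lra).
    apply Rmult_lt_compat_l; auto.
Qed.

Definition sum_dist {H H' : Type} (r : H -> H -> R) (r' : H' -> H' -> R)
    (p q : H * H') : R :=
  r (fst p) (fst q) + r' (snd p) (snd q).

Section SumDist.

Variables (H H' : Type) (r : H -> H -> R) (r' : H' -> H' -> R) (o : H) (o' : H').

Lemma horo_sum_dist_additive (f : H * H' -> R) :
  horo (H * H') (sum_dist r r') (o, o') f ->
  forall y y', f (y, y') = f (y, o') + f (o, y').
Proof.
  intros [_ [_ Happ]] y y'.
  enough (f (y, y') - f (y, o') - f (o, y') = 0) by lra.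
  apply Req0_of_Rabs_lt_all. intros eps Heps.
  destruct (Happ ((y, y') :: (y, o') :: (o, y') :: nil) (eps / 3) ltac:(lra))
    as [[x x'] Hx].
  pose proof (Rabs_def2 _ _ (Hx (y, y') ltac:(simpl; auto))) as A1.
  pose proof (Rabs_def2 _ _ (Hx (y, o') ltac:(simpl; auto))) as A2.
  pose proof (Rabs_def2 _ _ (Hx (o, y') ltac:(simpl; auto))) as A3.
  unfold sum_dist in A1, A2, A3; simpl in A1, A2, A3.
  apply Rabs_def1; lra.
Qed.

Lemma horo_sum_dist_fst (f : H * H' -> R) :
  r' o' o' = 0 -> horo (H * H') (sum_dist r r') (o, o') f ->
  horo H r o (fun y => f (y, o')).
Proof.
  intros Hr' [Hlip [Ho Happ]]. split; [|split]; auto.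
  - intros y z. pose proof (Hlip (y, o') (z, o')) as L.
    unfold sum_dist in L; simpl in L. lra.
  - intros F eps Heps.
    destruct (Happ (map (fun y => (y, o')) F) eps Heps) as [[x x'] Hx].
    exists x. intros y Hy.
    pose proof (Hx (y, o') (in_map (fun y => (y, o')) F y Hy)) as A.
    unfold sum_dist in A; simpl in A.
    replace (r x y - r x o) with (r x y + r' x' o' - (r x o + r' x' o')) by ring.
    exact A.
Qed.

Lemma horo_sum_dist_snd (f : H * H' -> R) :
  r o o = 0 -> horo (H * H') (sum_dist r r') (o, o') f ->
  horo H' r' o' (fun y' => f (o, y')).
Proof.
  intros Hr [Hlip [Ho Happ]]. split; [|split]; auto.
  - intros y z. pose proof (Hlip (o, y) (o, z)) as L.
    unfold sum_dist in L; simpl in L. lra.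
  - intros F eps Heps.
    destruct (Happ (map (fun y' => (o, y')) F) eps Heps) as [[x x'] Hx].
    exists x'. intros y' Hy'.
    pose proof (Hx (o, y') (in_map (fun y' => (o, y')) F y' Hy')) as A.
    unfold sum_dist in A; simpl in A.
    replace (r' x' y' - r' x' o') with (r x o + r' x' y' - (r x o + r' x' o')) by ring.
    exact A.
Qed.

Lemma horo_sum_dist_sum (u : H -> R) (u' : H' -> R) (f : H * H' -> R) :
  horo H r o u -> horo H' r' o' u' ->
  (forall y y', f (y, y') = u y + u' y') ->
  horo (H * H') (sum_dist r r') (o, o') f.
Proof.
  intros [Hlip [Ho Happ]] [Hlip' [Ho' Happ']] Hf. split; [|split].
  - intros [y y'] [z z']. rewrite !Hf. unfold sum_dist; simpl.
    replace (u y + u' y' - (u z + u' z')) with ((u y - u z) + (u' y' - u' z')) by ring.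
    eapply Rle_trans; [apply Rabs_triang|].
    apply Rplus_le_compat; auto.
  - rewrite Hf, Ho, Ho'. ring.
  - intros F eps Heps.
    destruct (Happ (map fst F) (eps / 2) ltac:(lra)) as [x Hx].
    destruct (Happ' (map snd F) (eps / 2) ltac:(lra)) as [x' Hx'].
    exists (x, x'). intros [y y'] Hy. rewrite Hf. unfold sum_dist; simpl.
    pose proof (Rabs_def2 _ _ (Hx y (in_map fst F (y, y') Hy))) as A.
    pose proof (Rabs_def2 _ _ (Hx' y' (in_map snd F (y, y') Hy))) as A'.
    apply Rabs_def1; lra.
Qed.

Lemma horo_sum_dist_iff (f : H * H' -> R) :
  r o o = 0 -> r' o' o' = 0 ->
  horo (H * H') (sum_dist r r') (o, o') f <->
  exists (u : H -> R) (u' : H' -> R),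
    horo H r o u /\ horo H' r' o' u' /\ (forall y y', f (y, y') = u y + u' y').
Proof.
  intros Hr Hr'. split.
  - intros Hf. exists (fun y => f (y, o')), (fun y' => f (o, y')).
    split; [|split].
    + exact (horo_sum_dist_fst f Hr' Hf).
    + exact (horo_sum_dist_snd f Hr Hf).
    + exact (horo_sum_dist_additive f Hf).
  - intros [u [u' [Hu [Hu' Hf]]]]. exact (horo_sum_dist_sum u u' f Hu Hu' Hf).
Qed.

End SumDist.

Theorem lemma2p2
  (G : Type) (mul : G -> G -> G) (inv : G -> G) (o : G)
  (HG : is_group G mul inv o) (S : list G) (d : G -> G -> nat)
  (Hd : word_metric G mul inv S d)
  (G' : Type) (mul' : G' -> G' -> G') (inv' : G' -> G') (o' : G')
  (HG' : is_group G' mul' inv' o') (S' : list G') (d' : G' -> G' -> nat)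
  (Hd' : word_metric G' mul' inv' S' d')
  (c : R) (Hc : 0 < c) :
  forall f : G * G' -> R,
    horo (G * G') (rho_prod G G' d d' c) (o, o') f <->
    exists (u : G -> R) (u' : G' -> R),
      horo G (fun x y => INR (d x y)) o u /\
      horo G' (fun x y => INR (d' x y)) o' u' /\
      (forall y y', f (y, y') = u y + u' y' / c).
Proof.
  intros f.
  assert (Hdiag : INR (d o o) = 0) by (rewrite (word_metric_refl _ _ _ _ _ Hd); reflexivity).
  assert (Hdiag' : INR (d' o' o') / c = 0)
    by (rewrite (word_metric_refl _ _ _ _ _ Hd'); simpl; field; lra).
  change (rho_prod G G' d d' c)
    with (sum_dist (fun x y => INR (d x y)) (fun x' y' => INR (d' x' y') / c)).
  rewrite horo_sum_dist_iff by assumption.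
  split.
  - intros [u [v [Hu [Hv Hf]]]]. exists u, (fun y' => c * v y'). split; [|split]; auto.
    + refine (horo_scale _ _ _ _ _ _ c Hc _ _ Hv); intros; [field; lra | reflexivity].
    + intros y y'. rewrite Hf. field. lra.
  - intros [u [u' [Hu [Hu' Hf]]]]. exists u, (fun y' => u' y' / c). split; [|split]; auto.
    refine (horo_scale _ _ _ _ _ _ (/ c) (Rinv_0_lt_compat c Hc) _ _ Hu');
      intros; unfold Rdiv; ring.
Qed.
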